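(* Let $\mathcal{N}$ be a chemical reaction network with stoichiometric subspace of dimension $s$, let $\{\omega^1,\dots,\omega^d\}$ be a reduced basis of $\Gamma^\perp$ and $\widetilde f_\kappa$ the associated extended rate function. The terms in the expansion of $\det(J_c(\widetilde f_\kappa))$ are monomials in $\kappa$ of total degree $s$ and of degree at most one in each rate constant. Further, let $R=\{y^1\to y'^1,\dots,y^s\to y'^s\}$ be a set of $s$ reactions of $\mathcal{N}$. For $c\in\mathbb{R}^n_+$, the coefficient of the monomial $\prod_{i=1}^s k_{y^i\to y'^i}$ in $\det(J_c(\widetilde f_\kappa))$ is $$(-1)^s\,c^{-\mathbf{1}+\sum_{i=1}^s y^i}\sum_{I\in\mathcal{O}_d(\mathcal{N})}\det(\mathcal{Y}(R)_I)\det(\Gamma(R)_I)\prod_{i\in I}c_i,$$ and equivalently it equals $$(-1)^d\,c^{-\mathbf{1}+\sum_{i=1}^s y^i}\sum_{R'\in\mathcal{R}_s,\ R'\cap\mathcal{R}=R}\sigma(R')\prod_{S_i\to 0\in R'\setminus R}c_i.$$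
   Context: A chemical reaction network $\mathcal{N}=(\mathcal{S},\mathcal{C},\mathcal{R})$ consists of a finite set of species $\mathcal{S}=\{S_1,\dots,S_n\}$, a finite set of complexes $\mathcal{C}\subset\mathbb{Z}_{\ge 0}^n$ (species $S_i$ identified with the $i$-th standard basis vector; zero complex allowed), and a finite set of reactions $\mathcal{R}\subset\mathcal{C}\times\mathcal{C}$, written $y\to y'$, with $y\ne y'$. A rate vector is $\kappa=(k_{y\to y'})\in\mathbb{R}_+^{\mathcal{R}}$ ($\mathbb{R}_+$ the positive reals); the mass-action species formation rate function is $f_\kappa(c)=\sum_{y\to y'\in\mathcal{R}}k_{y\to y'}c^y(y'-y)$ with $c^y=\prod_i c_i^{y_i}$ (also for integer exponents, e.g. $c^{-\mathbf 1+v}$ with $\mathbf 1=(1,\dots,1)$), components $f_{\kappa,i}$. The stoichiometric subspace is $\Gamma=\mathrm{span}\{y'-y:y\to y'\in\mathcal{R}\}$, $s=\dim\Gamma$, $d=n-s$. A basis $\{\omega^1,\dots,\omega^d\}$ of $\Gamma^\perp$ with $\omega^i=(\lambda^i_1,\dots,\lambda^i_n)$ is reduced if $\lambda^i_i=1$ and $\lambda^i_j=0$ for $j\in\{1,\dots,d\}$, $j\ne i$ (species assumed ordered so one exists). The extended rate function is $\widetilde f_\kappa(c)=(\omega^1\cdot c,\dots,\omega^d\cdot c,f_{\kappa,d+1}(c),\dots,f_{\kappa,n}(c))$; $J_c$ is the Jacobian at $c$. Let $\mathcal{O}(\mathcal{N})=\{i: S_i\to 0\notin\mathcal{R}\}$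 and $\mathcal{O}_d(\mathcal{N})$ the set of subsets of $\mathcal{O}(\mathcal{N})$ of cardinality $d$. For a set $R$ of $m$ reactions $y^i\to y'^i$, $\mathcal{Y}(R)$ is the $n\times m$ matrix with $i$-th column $y^i$ and $\Gamma(R)$ the $n\times m$ matrix with $i$-th column $y^i-y'^i$; for an $n\times s$ matrix $M$ and $I\in\mathcal{O}_d(\mathcal{N})$, $M_I$ is the $s\times s$ matrix obtained by deleting the rows with index in $I$. For a set $R'$ of $n$ reactions, $\sigma(R')=(-1)^n\det(\mathcal{Y}(R'))\det(\Gamma(R'))$. $\mathcal{R}_s$ is the set of all sets $R'$ of $n$ reactions of the form $R\cup\{S_i\to 0: i\in I\}$, where $R$ is a set of $s$ reactions of $\mathcal{R}$ and $I\in\mathcal{O}_d(\mathcal{N})$. *)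

From HB Require Import structures.
From mathcomp Require Import all_boot all_order all_algebra.
From mathcomp Require Import mpoly.
Set Implicit Arguments.
Unset Strict Implicit.
Unset Printing Implicit Defensive.
Import Order.TTheory GRing.Theory Num.Theory.
Local Open Scope ring_scope.

(* Species are indexed by 'I_n.  A complex is a vector of N^n.  A network
   with m reactions is given by an injective map  rs : 'I_m -> cplx * cplx,
   rs r = (y, y') meaning the reaction y -> y'. *)
Definition cplx (n : nat) := {ffun 'I_n -> nat}.

Definition unitc (n : nat) (i : 'I_n) : cplx n := [ffun j => (j == i) : nat].
Definition zeroc (n : nat) : cplx n := [ffun => 0%N].

Definition Oset (n m : nat) (rs : 'I_m -> cplx n * cplx n) : {set 'I_n} :=
  [set i | [forall r, rs r != (unitc i, zeroc n)]].

Definition Od (n m d : nat) (rs : 'I_m -> cplx n * cplx n) : {set {set 'I_n}} :=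
  [set I : {set 'I_n} | (I \subset Oset rs) && (#|I| == d)].

(* Stoichiometric matrix: row r is y'_r - y_r; Gamma is its row space. *)
Definition stoich (R : nzRingType) (n m : nat) (rs : 'I_m -> cplx n * cplx n)
  : 'M[R]_(m, n) := \matrix_(r, i) (((rs r).2 i)%:R - ((rs r).1 i)%:R).

(* A reduced basis of Gamma^perp (rows of Om), the first d species being
   the distinguished ones. *)
Definition reduced_basis (R : fieldType) (d s m : nat)
  (rs : 'I_m -> cplx (d + s) * cplx (d + s)) (Om : 'M[R]_(d, d + s)) : Prop :=
  [/\ row_free Om,
      (Om == kermx (stoich R rs)^T)%MS &
      forall (i : 'I_d) (j : 'I_(d + s)), (j < d)%N ->
        Om i j = ((val i == val j) : nat)%:R].

(* Rate constants are formal variables 'X_r (r < m): polynomials in kappa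
   are elements of {mpoly R[m]}. *)
Definition frate (R : comNzRingType) (n m : nat) (rs : 'I_m -> cplx n * cplx n)
  (i : 'I_n) : {mpoly {mpoly R[m]}[n]} :=
  \sum_(r < m) ('X_r : {mpoly R[m]})%:MP *
     (\prod_(j < n) 'X_j ^+ ((rs r).1 j)) *
     ((((rs r).2 i)%:R - ((rs r).1 i)%:R : {mpoly R[m]})%:MP).

Definition ftilde (R : comNzRingType) (d s m : nat)
  (rs : 'I_m -> cplx (d + s) * cplx (d + s)) (Om : 'M[R]_(d, d + s))
  (i : 'I_(d + s)) : {mpoly {mpoly R[m]}[d + s]} :=
  match split i with
  | inl i' => \sum_(j < d + s) ((Om i' j)%:MP : {mpoly R[m]})%:MP * 'X_j
  | inr _ => frate R rs i
  end.

Definition jac (R : comNzRingType) (d s m : nat)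
  (rs : 'I_m -> cplx (d + s) * cplx (d + s)) (Om : 'M[R]_(d, d + s))
  (c : 'I_(d + s) -> R) : 'M[{mpoly R[m]}]_(d + s) :=
  \matrix_(i, j) (mderiv j (ftilde rs Om i)).@[fun k => (c k)%:MP].

Definition monR (m : nat) (Rr : {set 'I_m}) : 'X_{1..m} :=
  [multinom ((i \in Rr) : nat) | i < m].

(* Extended reactions: inl r is the network reaction r, inr i is S_i -> 0. *)
Definition xreac (n m : nat) := ('I_m + 'I_n)%type.

Definition xsrc (n m : nat) (rs : 'I_m -> cplx n * cplx n) (x : xreac n m)
  : cplx n := match x with inl r => (rs r).1 | inr i => unitc i end.
Definition xtgt (n m : nat) (rs : 'I_m -> cplx n * cplx n) (x : xreac n m)
  : cplx n := match x with inl r => (rs r).2 | inr _ => zeroc n end.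

(* Y(X): n x k matrix whose j-th column is the source complex of the j-th
   reaction of X (reactions of X listed in the enumeration order);
   Gamma(X): same with columns y - y'. *)
Definition Ymat (R : nzRingType) (n m k : nat) (rs : 'I_m -> cplx n * cplx n)
  (X : {set xreac n m}) : 'M[R]_(n, k) :=
  \matrix_(i, j) ((xsrc rs (nth (inr i) (enum X) j) i)%:R).
Definition Gmat (R : nzRingType) (n m k : nat) (rs : 'I_m -> cplx n * cplx n)
  (X : {set xreac n m}) : 'M[R]_(n, k) :=
  \matrix_(i, j) ((xsrc rs (nth (inr i) (enum X) j) i)%:R
                  - (xtgt rs (nth (inr i) (enum X) j) i)%:R).

(* M_I: delete the rows with index in I (|I| = d) from a (d+s) x s matrix,
   keeping the remaining rows in increasing order. *)
Definition delrows (T : Type) (d s : nat) (I : {set 'I_(d + s)})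
  (M : 'M[T]_(d + s, s)) : 'M[T]_s :=
  rowsub (fun k : 'I_s => nth (rshift d k) (enum (~: I)) k) M.

Definition sigma (R : comNzRingType) (n m : nat) (rs : 'I_m -> cplx n * cplx n)
  (X : {set xreac n m}) : R :=
  (-1) ^+ n * \det (Ymat R n rs X) * \det (Gmat R n rs X).

Definition Rs (n m d s : nat) (rs : 'I_m -> cplx n * cplx n)
  : {set {set xreac n m}} :=
  [set X : {set xreac n m} | [exists Rr : {set 'I_m}, exists I : {set 'I_n},
     [&& #|Rr| == s, I \in Od d rs & X == (inl @: Rr) :|: (inr @: I)]]].

Definition cpow (R : unitRingType) (n m : nat) (rs : 'I_m -> cplx n * cplx n)
  (Rr : {set 'I_m}) (c : 'I_n -> R) : R :=
  \prod_(i < n) c i ^ ((\sum_(r in Rr) (rs r).1 i)%:Z - 1).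

(* The last d rows of the Jacobian are sum_r k_r gamma_r (grad c^(y_r)), the
   first d rows are the constant rows of Om.  Multilinearity expands the
   determinant over maps phi from these rows to reactions, with coefficient
   prod_i gamma_(phi i) times det(Om; grad c^(y_(phi i))); non-injective phi
   give two equal rows, so every monomial is square-free of degree s.  The
   maps with image R recombine into det(gamma_R) det(Om; grad c^(y_R)).
   Writing grad c^y = c^y (y_j / c_j)_j and Om = (1 | Lambda), the columns of
   K = (-Lambda; 1) span ker Om, which contains Gamma(R); hence the product is
   (-1)^s c^(sum y) det(Y(R)^T diag(1/c) Gamma(R)), and Cauchy-Binet turns it
   into the sum over d-subsets I.  If S_i -> 0 is a reaction for some i in I,
   column i of Om vanishes, K_I has a zero column and the term is 0.  Finally
   Y and Gamma of R u {S_i -> 0 : i in I} are, up to the same row and column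
   permutations, block triangular with diagonal blocks 1 and Y(R)_I, Gamma(R)_I. *)

From HB Require Import structures.
From mathcomp Require Import all_boot all_order all_algebra.
From mathcomp Require Import mpoly.
From mathcomp Require Import fingroup perm.
From mathcomp.algebra_tactics Require Import ring.
Import Order.TTheory GRing.Theory Num.Theory.
Local Open Scope ring_scope.

Set Implicit Arguments.
Unset Strict Implicit.
Unset Printing Implicit Defensive.

Section Enumerates.
Variables (T : finType) (S : {set T}) (s : nat).
Hypothesis cardS : #|S| = s.

(* Using [e k] itself as the default of [nth] avoids needing an inhabitant of [T]. *)
Definition enumerates (e : 'I_s -> T) := forall k, e k = nth (e k) (enum S) k.

Lemma enumerates_nth (x0 : 'I_s -> T) :
  enumerates (fun k => nth (x0 k) (enum S) k).
Proof. by move=> k; rewrite (set_nth_default (x0 k)) // -cardE cardS. Qed.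

Lemma exists_enumerates : exists e, enumerates e.
Proof.
exists (fun k => enum_val (cast_ord (esym cardS) k)).
exact: enumerates_nth.
Qed.

Variables (e : 'I_s -> T) (he : enumerates e).

Lemma enumerates_inj : injective e.
Proof.
have size_enum : size (enum S) = s by rewrite -cardE.
move=> k1 k2 ek; apply: val_inj => /=; apply/eqP.
rewrite -(nth_uniq (e k1) _ _ (enum_uniq (pred_of_set S))) ?size_enum //.
by rewrite -he ek he (set_nth_default (e k2)) // size_enum.
Qed.

Lemma enumerates_imset : [set e k | k in 'I_s] = S.
Proof.
apply/eqP; rewrite eqEcard card_imset ?card_ord ?cardS; last exact: enumerates_inj.
rewrite leqnn andbT; apply/subsetP => _ /imsetP [k _ ->].
by rewrite he -mem_enum mem_nth // -cardE cardS.
Qed.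

Lemma big_enumerates (R : Type) (idx : R) (op : Monoid.com_law idx)
    (F : T -> R) :
  \big[op/idx]_(x in S) F x = \big[op/idx]_k F (e k).
Proof.
rewrite -enumerates_imset big_imset //= => x y _ _; exact: enumerates_inj.
Qed.

Lemma imset_comp_enumerates (psi : {ffun 'I_s -> 'I_s}) :
  ([set e (psi i) | i in 'I_s] == S) = injectiveb psi.
Proof.
have -> : [set e (psi i) | i in 'I_s] = e @: (psi @: 'I_s) by rewrite -imset_comp.
rewrite eqEcard card_imset; last exact: enumerates_inj.
have -> : e @: (psi @: 'I_s) \subset S.
  by rewrite -enumerates_imset; apply/imsetS/subsetP.
rewrite cardS /=; apply/idP/injectiveP => [le_s_im | inj_psi].
  move=> i j; apply: (imset_injP _ _ _ _); [|by []|by []].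
  rewrite eqn_leq leq_imset_card cardsT card_ord (leq_trans le_s_im) //.
  by apply/subset_leq_card/subsetP => _ /imsetP [k _ ->]; rewrite imset_f.
by rewrite card_imset // card_ord.
Qed.

End Enumerates.

Section DetExpansion.
Variable R : comNzRingType.

Lemma det_sum_rows (T : finType) n (G : 'I_n -> T -> 'I_n -> R) :
  \det (\matrix_(i, j) (\sum_k G i k j) : 'M[R]_n)
  = \sum_(f : {ffun 'I_n -> T}) \det (\matrix_(i, j) (G i (f i) j) : 'M[R]_n).
Proof.
rewrite /determinant.
transitivity (\sum_(p : 'S_n) \sum_(f : {ffun 'I_n -> T})
   (-1) ^+ p * \prod_i G i (f i) (p i)).
  apply: eq_bigr => p _.
  rewrite (eq_bigr (fun i => \sum_k G i k (p i))) => [|i _]; last by rewrite mxE.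
  by rewrite bigA_distr_bigA big_distrr.
rewrite exchange_big; apply: eq_bigr => f _; apply: eq_bigr => p _.
by congr (_ * _); apply: eq_bigr => i _; rewrite mxE.
Qed.

Lemma det_col_mx_sum_rows (T : finType) d s (U : 'M[R]_(d, d + s))
    (G : 'I_s -> T -> 'I_(d + s) -> R) :
  \det (col_mx U (\matrix_(i, j) \sum_k G i k j))
  = \sum_(f : {ffun 'I_s -> T}) \det (col_mx U (\matrix_(i, j) G i (f i) j)).
Proof.
rewrite /determinant.
transitivity (\sum_(p : 'S_(d + s)) \sum_(f : {ffun 'I_s -> T})
   (-1) ^+ p * ((\prod_(i < d) U i (p (lshift s i)))
                * \prod_(i < s) G i (f i) (p (rshift d i)))).
  apply: eq_bigr => p _; rewrite big_split_ord /=.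
  rewrite (eq_bigr (fun i => U i (p (lshift s i)))) => [|i _]; last first.
    by rewrite col_mxEu.
  rewrite (eq_bigr (fun i => \sum_k G i k (p (rshift d i)))) => [|i _]; last first.
    by rewrite col_mxEd mxE.
  by rewrite bigA_distr_bigA !big_distrr.
rewrite exchange_big; apply: eq_bigr => f _; apply: eq_bigr => p _.
rewrite big_split_ord /=; congr (_ * (_ * _)); apply: eq_bigr => i _.
  by rewrite col_mxEu.
by rewrite col_mxEd mxE.
Qed.

Lemma det_scale_rows n (a : 'I_n -> R) (M : 'M[R]_n) :
  \det (\matrix_(i, j) (a i * M i j)) = (\prod_i a i) * \det M.
Proof.
have -> : \matrix_(i, j) (a i * M i j) = diag_mx (\row_i a i) *m M.
  by apply/matrixP => i j; rewrite mul_diag_mx !mxE.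
rewrite det_mulmx det_diag.
by congr (_ * _); apply: eq_bigr => i _; rewrite mxE.
Qed.

Lemma det_col_mx_scale_rows d s (U : 'M[R]_(d, d + s)) (a : 'I_s -> R)
    (M : 'M[R]_(s, d + s)) :
  \det (col_mx U (\matrix_(i, j) (a i * M i j)))
  = (\prod_i a i) * \det (col_mx U M).
Proof.
have -> : col_mx U (\matrix_(i, j) (a i * M i j)) =
    block_mx 1%:M 0 0 (diag_mx (\row_i a i)) *m col_mx U M.
  rewrite mul_block_col !mul1mx !mul0mx add0r addr0; congr col_mx.
  by apply/matrixP => i j; rewrite mul_diag_mx !mxE.
rewrite det_mulmx det_lblock det1 mul1r det_diag.
by congr (_ * _); apply: eq_bigr => i _; rewrite mxE.
Qed.

Lemma det_rowsub_not_inj n s (B : 'M[R]_(n, s)) (phi : 'I_s -> 'I_n) :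
  ~~ injectiveb phi -> \det (rowsub phi B) = 0.
Proof.
case/injectivePn => i1 [i2 ne_i12 eq_phi].
by apply: (determinant_alternate ne_i12) => k; rewrite !mxE eq_phi.
Qed.

Lemma det_mulmx_sum_ffun n s (A : 'M[R]_(s, n)) (B : 'M[R]_(n, s)) :
  \det (A *m B) = \sum_(phi : {ffun 'I_s -> 'I_n})
                    (\prod_i A i (phi i)) * \det (rowsub phi B).
Proof.
have -> : A *m B = \matrix_(i, l) (\sum_j A i j * B j l).
  by apply/matrixP => i l; rewrite !mxE.
rewrite det_sum_rows; apply: eq_bigr => phi _; rewrite -det_scale_rows.
by congr (\det _); apply/matrixP => i j; rewrite !mxE.
Qed.

(* Collecting the terms of a multilinear expansion whose row map has image
   [S]: [D] behaves like a determinant under reindexing of its rows. *)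
Lemma sum_ffun_image_det (T : finType) s (S : {set T}) (e : 'I_s -> T)
    (cardS : #|S| = s) (he : enumerates S e)
    (F : 'I_s -> T -> R) (D : {ffun 'I_s -> T} -> R) :
  (forall psi : {ffun 'I_s -> 'I_s},
     D [ffun i => e (psi i)] = \det (rowsub psi (1%:M : 'M[R]_s)) * D [ffun k => e k]) ->
  \sum_(phi : {ffun 'I_s -> T} | [set phi i | i in 'I_s] == S)
     (\prod_i F i (phi i)) * D phi
  = \det (\matrix_(i, k) F i (e k)) * D [ffun k => e k].
Proof.
move=> DE.
pose E (psi : {ffun 'I_s -> 'I_s}) : {ffun 'I_s -> T} := [ffun i => e (psi i)].
pose G (phi : {ffun 'I_s -> T}) := (\prod_i F i (phi i)) * D phi.
have E_inj : injective E.
  move=> p1 p2 /ffunP Ep; apply/ffunP => i; apply: (enumerates_inj cardS he).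
  by have := Ep i; rewrite !ffunE.
have imE psi : ([set E psi i | i in 'I_s] == S) = injectiveb psi.
  rewrite -(imset_comp_enumerates cardS he); congr (_ == _).
  by apply: eq_imset => i; rewrite ffunE.
pose Inj := [set psi : {ffun 'I_s -> 'I_s} | injectiveb psi].
have imageE (phi : {ffun 'I_s -> T}) :
    ([set phi i | i in 'I_s] == S) = (phi \in E @: Inj).
  apply/idP/imsetP => [/eqP im_phi | [psi]]; last by rewrite inE -imE => ? ->.
  have lt_index i : (index (phi i) (enum S) < s)%N.
    by rewrite -[X in (_ < X)%N]cardS cardE index_mem mem_enum -im_phi imset_f.
  pose psi := [ffun i => Ordinal (lt_index i)].
  have phiE : phi = E psi.
    apply/ffunP => i; rewrite !ffunE he /= (set_nth_default (phi i)).
      by rewrite nth_index // mem_enum -im_phi imset_f.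
    by rewrite -cardE cardS.
  by exists psi; rewrite // inE -imE -phiE im_phi.
have -> : \det (\matrix_(i, k) F i (e k)) * D [ffun k => e k]
          = \sum_psi G (E psi).
  rewrite -[\matrix_(i, k) _]mulmx1 det_mulmx_sum_ffun big_distrl.
  apply: eq_bigr => psi _; rewrite /G DE mulrA; congr (_ * _ * _).
  by apply: eq_bigr => i _; rewrite !mxE ffunE.
rewrite (bigID (mem Inj)) /= [X in _ + X]big1 ?addr0 => [|psi]; last first.
  by rewrite inE => ?; rewrite /G DE det_rowsub_not_inj // mul0r mulr0.
by rewrite (eq_bigl _ _ imageE) big_imset //= => ? ? _ _; apply: E_inj.
Qed.

Lemma cauchy_binet n s (A : 'M[R]_(s, n)) (B : 'M[R]_(n, s)) (x0 : 'I_s -> 'I_n) :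
  \det (A *m B) = \sum_(S : {set 'I_n} | #|S| == s)
     \det (colsub (fun k => nth (x0 k) (enum S) k) A) *
     \det (rowsub (fun k => nth (x0 k) (enum S) k) B).
Proof.
rewrite det_mulmx_sum_ffun.
rewrite (partition_big (fun phi : {ffun 'I_s -> 'I_n} => [set phi i | i in 'I_s]) predT) //=.
rewrite (bigID (fun S : {set 'I_n} => #|S| == s)) /= [X in _ + X]big1 ?addr0; last first.
  move=> S cardS; apply: big1 => phi /eqP im_phi.
  rewrite det_rowsub_not_inj ?mulr0 //; apply: contra cardS => /injectiveP inj_phi.
  by rewrite -im_phi card_imset ?card_ord.
apply: eq_bigr => S /eqP cardS.
rewrite (sum_ffun_image_det cardS (enumerates_nth cardS x0) (fun i j => A i j)
          (D := fun phi : {ffun 'I_s -> 'I_n} => \det (rowsub phi B))); last first.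
  move=> psi; rewrite -det_mulmx mul_rowsub_mx mul1mx.
  by congr (\det _); apply/matrixP => i l; rewrite !mxE !ffunE.
by congr (\det _ * \det _); apply/matrixP => i l; rewrite !mxE ?ffunE.
Qed.

End DetExpansion.

Lemma mderivXU (R : comNzRingType) n (i j : 'I_n) :
  mderiv j ('X_i : {mpoly R[n]}) = ((i == j)%:R)%:MP.
Proof.
rewrite mderivX mnm1E; case: eqP => [->|_]; last by rewrite scale0r.
have -> : (U_(j) - U_(j))%MM = 0%MM by apply/mnmP => l; rewrite mnmBE subnn mnmE.
by rewrite mpolyX0 scale1r.
Qed.

(* The partial derivative of [c ^ y] in the direction [j], evaluated at [c];
   when [y j = 0] the truncated exponent [y j - 1] is harmless. *)
Definition dmonomial (R : comNzRingType) n (c : 'I_n -> R) (y : cplx n) (j : 'I_n) : R :=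
  (y j)%:R * \prod_l c l ^+ (y l - (j == l))%N.

Section JacobianExpansion.
Variables (R : comNzRingType) (d s m : nat).
Variables (rs : 'I_m -> cplx (d + s) * cplx (d + s)) (Om : 'M[R]_(d, d + s)).
Variable c : 'I_(d + s) -> R.

Local Notation gamma r i := (stoich R rs r (rshift d i)).

Lemma jac_col_mx : jac rs Om c = col_mx (map_mx (@mpolyC m R) Om)
   (\matrix_(i, j) \sum_r 'X_r * (gamma r i * dmonomial c (rs r).1 j)%:MP).
Proof.
apply/matrixP => i j; rewrite -[i]splitK mxE /ftilde unsplitK.
case: (split i) => k /=;
  rewrite ?col_mxEu ?col_mxEd mxE (raddf_sum (mderiv j)) (raddf_sum (meval _)) /=.
  rewrite (bigD1 j) //= big1 ?addr0 => [|l ne_lj]; last first.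
    by rewrite mderiv_mulC mderivXU (negbTE ne_lj) mpolyC0 mulr0 meval0.
  by rewrite mderiv_mulC mderivXU eqxx mpolyC1 mulr1 mevalC.
apply: eq_bigr => r _; set y := (rs r).1.
have -> : \prod_(l < d + s) 'X_l ^+ y l
          = 'X_[[multinom y l | l < d + s]] :> {mpoly {mpoly R[m]}[d + s]}.
  by rewrite mpolyXE_id; apply: eq_bigr => l _; rewrite mnmE.
set P := ('X_[[multinom y l | l < d + s]] : {mpoly {mpoly R[m]}[d + s]}).
set G := (_ - _ : {mpoly R[m]}).
rewrite (_ : ('X_r)%:MP * P * G%:MP = ('X_r * G)%:MP * P); last first.
  by rewrite mulrAC -mpolyCM.
rewrite mul_mpolyC mderivZ mderivX mevalZ mevalZ mevalX mnmE.
rewrite (eq_bigr (fun l => ((c l ^+ (y l - (j == l))%N)%:MP))); last first.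
  by move=> l _; rewrite mnmBE mnmE mnm1E rmorphXn.
rewrite -rmorph_prod /dmonomial /G !mxE !rmorphM /= rmorphB /= !rmorph_nat.
ring.
Qed.

Definition grad_mx (phi : {ffun 'I_s -> 'I_m}) : 'M[R]_(d + s) :=
  col_mx Om (\matrix_(i, j) dmonomial c (rs (phi i)).1 j).

Definition mnm_of (phi : {ffun 'I_s -> 'I_m}) : 'X_{1..m} := (\sum_i U_(phi i))%MM.

Lemma det_jac_sum_ffun : \det (jac rs Om c) =
  \sum_(phi : {ffun 'I_s -> 'I_m})
     ((\prod_i gamma (phi i) i) * \det (grad_mx phi)) *: 'X_[mnm_of phi].
Proof.
rewrite jac_col_mx det_col_mx_sum_rows; apply: eq_bigr => phi _.
pose a i := 'X_(phi i) * (gamma (phi i) i)%:MP.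
pose M := \matrix_(i, j) (dmonomial c (rs (phi i)).1 j)%:MP : 'M[{mpoly R[m]}]_(s, d + s).
rewrite (_ : \matrix_(i, j) _ = \matrix_(i, j) (a i * M i j)); last first.
  by apply/matrixP => i j; rewrite /a !mxE rmorphM mulrA.
rewrite det_col_mx_scale_rows.
have -> : col_mx (map_mx (@mpolyC m R) Om) M = map_mx (@mpolyC m R) (grad_mx phi).
  by rewrite /grad_mx map_col_mx; congr col_mx; apply/matrixP => i j; rewrite !mxE.
rewrite det_map_mx /a big_split /= -rmorph_prod.
rewrite /mnm_of -(big_morph (fun mm => 'X_[mm]) (@mpolyXD _ _) (@mpolyX0 _ _)).
by rewrite -mul_mpolyC rmorphM /=; ring.
Qed.

Lemma mcoeff_det_jac mon : (\det (jac rs Om c))@_mon =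
  \sum_(phi : {ffun 'I_s -> 'I_m} | mnm_of phi == mon)
     (\prod_i gamma (phi i) i) * \det (grad_mx phi).
Proof.
rewrite det_jac_sum_ffun raddf_sum /= [RHS]big_mkcond; apply: eq_bigr => phi _.
by rewrite mcoeffZ mcoeffX; case: eqP; rewrite ?mulr1 ?mulr0.
Qed.

Lemma det_grad_mx_not_inj (phi : {ffun 'I_s -> 'I_m}) :
  ~~ injectiveb phi -> \det (grad_mx phi) = 0.
Proof.
case/injectivePn => i1 [i2 ne_i12 eq_phi].
have ne_rshift : rshift d i1 != rshift d i2.
  by apply: contra ne_i12 => /eqP /rshift_inj ->.
apply: (determinant_alternate ne_rshift) => k.
by rewrite /grad_mx !col_mxEd !mxE eq_phi.
Qed.

Lemma mnm_ofE (phi : {ffun 'I_s -> 'I_m}) r : mnm_of phi r = (\sum_i (phi i == r))%N.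
Proof. by rewrite /mnm_of mnm_sumE; apply: eq_bigr => i _; rewrite mnm1E. Qed.

Lemma mnm_of_gt0 (phi : {ffun 'I_s -> 'I_m}) r :
  (0 < mnm_of phi r)%N = (r \in [set phi i | i in 'I_s]).
Proof.
rewrite mnm_ofE lt0n sum_nat_eq0 negb_forall.
apply/existsP/imsetP => [[i]|[i _ ->]]; last by exists i; rewrite eqxx.
by rewrite eqb0 negbK => /eqP <-; exists i.
Qed.

Lemma mnm_of_inj (phi : {ffun 'I_s -> 'I_m}) r : injective phi ->
  mnm_of phi r = (r \in [set phi i | i in 'I_s]).
Proof.
move=> inj_phi; case: imsetP => [[i _ ->] | not_im]; last first.
  by rewrite mnm_ofE big1 // => i _; case: eqP => // phi_i; case: not_im; exists i.
rewrite mnm_ofE (bigD1 i) //= eqxx big1 // => j.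
by move=> ne_ji; case: eqP => // eq_phi; move: ne_ji; rewrite (inj_phi _ _ eq_phi) eqxx.
Qed.

Lemma msupp_det_jac mon : mon \in msupp (\det (jac rs Om c)) ->
  mdeg mon = s /\ forall r, (mon r <= 1)%N.
Proof.
rewrite mcoeff_msupp mcoeff_det_jac => nz_sum.
have /existsP [phi /andP [/eqP <- nz_phi]] :
    [exists phi : {ffun 'I_s -> 'I_m}, (mnm_of phi == mon) &&
       ((\prod_i gamma (phi i) i) * \det (grad_mx phi) != 0)].
  apply: contraNT nz_sum => /existsPn none; apply/eqP/big1 => phi mon_phi.
  by apply/eqP; move: (none phi); rewrite mon_phi negbK.
have inj_phi : injective phi.
  apply/injectiveP; apply: contraNT nz_phi => /det_grad_mx_not_inj ->.
  by rewrite mulr0.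
split; last by move=> r; rewrite mnm_of_inj //; case: (_ \in _).
rewrite /mnm_of mdeg_sum (eq_bigr (fun _ => 1%N)) => [|i _]; last by rewrite mdeg1.
by rewrite sum1_card card_ord.
Qed.

Lemma mnm_of_eq_monR (Rr : {set 'I_m}) (phi : {ffun 'I_s -> 'I_m}) : #|Rr| = s ->
  (mnm_of phi == monR Rr) = ([set phi i | i in 'I_s] == Rr).
Proof.
move=> cardR; apply/eqP/eqP => [mon_phi | im_phi].
  apply/setP => r; rewrite -mnm_of_gt0 mon_phi /monR mnmE.
  by case: (r \in Rr).
have inj_phi : injective phi.
  have : {in 'I_s &, injective phi} by apply/imset_injP; rewrite im_phi cardR card_ord.
  by move=> inj i1 i2; apply: inj.
by apply/mnmP => r; rewrite mnm_of_inj // /monR mnmE im_phi.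
Qed.

Lemma mcoeff_det_jac_monR (Rr : {set 'I_m}) (e : 'I_s -> 'I_m) :
    #|Rr| = s -> enumerates Rr e ->
  (\det (jac rs Om c))@_(monR Rr) =
  \det (\matrix_(i, k) gamma (e k) i) * \det (grad_mx [ffun k => e k]).
Proof.
move=> cardR he; rewrite mcoeff_det_jac (eq_bigl _ _ (fun phi => mnm_of_eq_monR phi cardR)).
apply: (sum_ffun_image_det cardR he (fun i r => gamma r i)) => psi.
have -> : grad_mx [ffun i => e (psi i)] =
    block_mx 1%:M 0 0 (rowsub psi 1%:M) *m grad_mx [ffun k => e k].
  rewrite /grad_mx mul_block_col !mul1mx !mul0mx add0r addr0 mul_rowsub_mx mul1mx.
  by congr col_mx; apply/matrixP => i j; rewrite !mxE !ffunE.
by rewrite det_mulmx det_lblock det1 mul1r.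
Qed.

End JacobianExpansion.

Lemma enum_sum_set (T1 T2 : finType) (A : {set T1 + T2}) :
  enum A = map inl (enum [set x | inl x \in A]) ++ map inr (enum [set y | inr y \in A]).
Proof.
have enum_sum : Finite.enum (T1 + T2)%type = sum_enum T1 T2 by rewrite unlock.
rewrite /enum_mem enum_sum /sum_enum filter_cat !filter_map.
by congr (_ ++ _); congr (map _ _); apply: eq_filter => x; rewrite /= inE.
Qed.

Section ExtendedReactionSets.
Variables (n m : nat).

Definition xreac_set (A : {set 'I_m}) (B : {set 'I_n}) : {set xreac n m} :=
  inl @: A :|: inr @: B.

Lemma xreac_set0 A : xreac_set A set0 = inl @: A.
Proof. by rewrite /xreac_set imset0 setU0. Qed.

Lemma xreac_set_inl A B : [set r | inl r \in xreac_set A B] = A.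
Proof.
apply/setP => r; rewrite !inE (mem_imset _ _ (@inl_inj _ _)).
by case: (r \in A) => //=; apply/negP => /imsetP [].
Qed.

Lemma xreac_set_inr A B : [set i | inr i \in xreac_set A B] = B.
Proof.
apply/setP => i; rewrite !inE (mem_imset _ _ (@inr_inj _ _)).
by case: (i \in B); rewrite ?orbT //= orbF; apply/negP => /imsetP [].
Qed.

Variables (s : nat) (A : {set 'I_m}) (e : 'I_s -> 'I_m).
Hypotheses (cardA : #|A| = s) (he : enumerates A e).

Lemma enum_xreac_set (B : {set 'I_n}) :
  enum (xreac_set A B) = map inl (enum A) ++ map inr (enum B).
Proof. by rewrite enum_sum_set xreac_set_inl xreac_set_inr. Qed.

Lemma nth_xreac_set_inl (B : {set 'I_n}) x0 (k : 'I_s) :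
  nth x0 (enum (xreac_set A B)) k = inl (e k).
Proof.
rewrite enum_xreac_set nth_cat size_map -cardE cardA ltn_ord.
by rewrite (nth_map (e k)) -?he // -cardE cardA.
Qed.

Lemma nth_xreac_set_inr d (B : {set 'I_n}) (i : 'I_n) (a : 'I_d) : #|B| = d ->
  nth (inr i) (enum (xreac_set A B)) (s + a) = inr (nth i (enum B) a).
Proof.
move=> cardB; rewrite enum_xreac_set nth_cat size_map -cardE cardA.
by rewrite ltnNge leq_addr /= addKn (nth_map i) // -cardE cardB.
Qed.

End ExtendedReactionSets.

Lemma dmonomialE (R : fieldType) n (c : 'I_n -> R) (y : cplx n) j : c j != 0 ->
  dmonomial c y j = (\prod_l c l ^+ y l) * ((y j)%:R / c j).
Proof.
rewrite /dmonomial; case y_j : (y j) => [|t] cj_neq0; first by rewrite !mul0r mulr0.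
rewrite (bigD1 j) //= [in RHS](bigD1 j) //= y_j eqxx subn1 /=.
rewrite (eq_bigr (fun l => c l ^+ y l)) => [|l ne_lj]; last first.
  by rewrite eq_sym (negbTE ne_lj) subn0.
by rewrite exprS; field.
Qed.

Section ReducedBasis.
Variables (R : fieldType) (d s m : nat).
Variables (rs : 'I_m -> cplx (d + s) * cplx (d + s)) (Om : 'M[R]_(d, d + s)).
Hypothesis Om_id : forall (i : 'I_d) (j : 'I_(d + s)), (j < d)%N ->
  Om i j = ((val i == val j) : nat)%:R.
Hypothesis Om_stoich : Om *m (stoich R rs)^T = 0.

(* In the reduced form [Om = (1 | Lambda)], the columns of [null_basis]
   form a basis of the kernel of [Om]. *)
Definition null_basis : 'M[R]_(d + s, s) := col_mx (- rsubmx Om) 1%:M.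

Lemma Om_row_mx : Om = row_mx 1%:M (rsubmx Om).
Proof.
rewrite -[Om in LHS]hsubmxK; congr row_mx; apply/matrixP => i j.
by rewrite !mxE Om_id //=.
Qed.

Lemma det_col_mx_Om (Z : 'M[R]_(s, d + s)) : \det (col_mx Om Z) = \det (Z *m null_basis).
Proof.
pose Q : 'M[R]_(d + s) := block_mx 1%:M (- rsubmx Om) 0 1%:M.
have detQ : \det Q = 1 by rewrite det_ublock !det1 mulr1.
rewrite -[LHS]mulr1 -detQ -det_mulmx.
have -> : col_mx Om Z *m Q = block_mx 1%:M 0 (lsubmx Z) (Z *m null_basis).
  rewrite mul_col_mx block_mxEv; congr col_mx.
    by rewrite Om_row_mx mul_row_block mul1mx mulmx0 addr0 mulmx1 mul1mx addNr.
  have -> : Z *m null_basis = lsubmx Z *m - rsubmx Om + rsubmx Z.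
    by rewrite /null_basis -{1}[Z]hsubmxK mul_row_col mulmx1.
  by rewrite -{1}[Z]hsubmxK mul_row_block mulmx1 mulmx0 addr0 mulmx1.
by rewrite det_lblock det1 mul1r.
Qed.

Lemma Om_col_eq0 i : i \notin Oset rs -> forall k, Om k i = 0.
Proof.
rewrite inE negb_forall => /existsP [r /negPn /eqP rs_r] k.
have := congr1 (fun M : 'M[R]_(d, m) => M k r) Om_stoich; rewrite !mxE.
rewrite (bigD1 i) //= big1 ?addr0 => [|j ne_ji]; last first.
  by rewrite !mxE rs_r !ffunE (negbTE ne_ji) subrr mulr0.
by rewrite !mxE rs_r !ffunE eqxx sub0r mulrN1 => /eqP; rewrite oppr_eq0 => /eqP.
Qed.

Lemma not_Oset_rshift i : i \notin Oset rs -> exists i', i = rshift d i'.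
Proof.
move=> /Om_col_eq0 Om_i; case: (splitP i) => [j ij | j ij]; last first.
  by exists j; apply: val_inj.
have := Om_i j; rewrite Om_id; last by rewrite ij.
by rewrite /= -ij eqxx => /eqP; rewrite oner_eq0.
Qed.

Lemma null_basis_col_Oset i' : rshift d i' \notin Oset rs ->
  forall j, null_basis j i' = (j == rshift d i')%:R.
Proof.
move=> /Om_col_eq0 Om_i j; rewrite -[j]splitK; case: (split j) => k /=.
  rewrite col_mxEu !mxE Om_i oppr0.
  suff -> : (lshift s k == rshift d i') = false by [].
  by apply/negbTE; rewrite -val_eqE /= neq_ltn (leq_trans (ltn_ord k)) ?leq_addr.
by rewrite col_mxEd !mxE (inj_eq (@rshift_inj _ _)).
Qed.

Variables (Rr : {set 'I_m}) (e : 'I_s -> 'I_m).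
Hypotheses (cardR : #|Rr| = s) (he : enumerates Rr e).

Definition YR : 'M[R]_(d + s, s) := Ymat R s rs (inl @: Rr).
Definition GR : 'M[R]_(d + s, s) := Gmat R s rs (inl @: Rr).

Lemma YRE i k : YR i k = ((rs (e k)).1 i)%:R.
Proof. by rewrite mxE -(xreac_set0 _ Rr) (nth_xreac_set_inl cardR he). Qed.

Lemma GRE i k : GR i k = ((rs (e k)).1 i)%:R - ((rs (e k)).2 i)%:R.
Proof. by rewrite mxE -(xreac_set0 _ Rr) (nth_xreac_set_inl cardR he). Qed.

Lemma mulmx_Om_GR : Om *m GR = 0.
Proof.
apply/matrixP => i k; rewrite !mxE.
have := congr1 (fun M : 'M[R]_(d, m) => M i (e k)) Om_stoich; rewrite !mxE => Om_ek.
transitivity (- \sum_j Om i j * (stoich R rs)^T j (e k)); last by rewrite Om_ek oppr0.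
rewrite -sumrN; apply: eq_bigr => j _.
by rewrite GRE !mxE; ring.
Qed.

Lemma null_basis_GR : null_basis *m dsubmx GR = GR.
Proof.
rewrite /null_basis mul_col_mx mul1mx -[in RHS](vsubmxK GR); congr col_mx.
have OmG := mulmx_Om_GR.
rewrite Om_row_mx -[GR in _ *m GR](vsubmxK GR) mul_row_col mul1mx in OmG.
by move/eqP: OmG; rewrite addr_eq0 => /eqP ->; rewrite mulNmx.
Qed.

Definition YR_div (c : 'I_(d + s) -> R) : 'M[R]_(s, d + s) :=
  \matrix_(k, j) (YR j k / c j).

Lemma det_stoich_mul_grad_mx (c : 'I_(d + s) -> R) : (forall i, c i != 0) ->
  \det (\matrix_(i, k) stoich R rs (e k) (rshift d i)) *
  \det (grad_mx rs Om c [ffun k => e k])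
  = (-1) ^+ s * (\prod_k \prod_l c l ^+ (rs (e k)).1 l) * \det (YR_div c *m GR).
Proof.
move=> c_neq0.
have det_gamma : \det (\matrix_(i, k) stoich R rs (e k) (rshift d i))
                 = (-1) ^+ s * \det (dsubmx GR).
  rewrite -detZ; congr (\det _); apply/matrixP => i k.
  by rewrite mxE [RHS]mxE [X in _ * X]mxE GRE !mxE; ring.
have det_grad : \det (grad_mx rs Om c [ffun k => e k])
    = (\prod_k \prod_l c l ^+ (rs (e k)).1 l) * \det (col_mx Om (YR_div c)).
  rewrite -det_col_mx_scale_rows /grad_mx; congr (\det (col_mx _ _)).
  apply/matrixP => k j; rewrite mxE [RHS]mxE [YR_div c k j]mxE ffunE.
  by rewrite dmonomialE // YRE mulrA.
rewrite det_gamma det_grad det_col_mx_Om -[in YR_div c *m GR]null_basis_GR.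
rewrite mulmxA det_mulmx.
ring.
Qed.

Lemma det_YR_div_GR (c : 'I_(d + s) -> R) :
  \det (YR_div c *m GR) = \sum_(I : {set 'I_(d + s)} | #|I| == d)
     (\prod_(j in ~: I) (c j)^-1) * \det (delrows I YR) * \det (delrows I GR).
Proof.
rewrite (cauchy_binet _ _ (fun k => rshift d k)) (reindex_inj (@setC_inj _)) /=.
have cardC (I : {set 'I_(d + s)}) : (#|~: I| == s) = (#|I| == d).
  have := cardsC I; rewrite card_ord => cardIC.
  by rewrite -(eqn_add2l #|I|) cardIC eqn_add2r eq_sym.
apply: eq_big => [I | I /eqP cardCI]; first exact: cardC.
rewrite (big_enumerates cardCI (enumerates_nth cardCI (fun k => rshift d k))).
have -> : colsub (fun k => nth (rshift d k) (enum (~: I)) k) (YR_div c)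
    = (\matrix_(l, k) ((c (nth (rshift d l) (enum (~: I)) l))^-1 * delrows I YR l k))^T.
  by apply/matrixP => k l; rewrite !mxE mulrC.
by rewrite det_tr det_scale_rows.
Qed.

Lemma det_delrows_GR_eq0 (I : {set 'I_(d + s)}) : #|I| = d ->
  ~~ (I \subset Oset rs) -> \det (delrows I GR) = 0.
Proof.
move=> cardI /subsetPn [i iI iO].
have [i' i_rshift] := not_Oset_rshift iO; rewrite i_rshift in iI iO.
have cardCI : #|~: I| = s.
  by have := cardsC I; rewrite card_ord cardI => /addnI.
rewrite /delrows -null_basis_GR -mul_rowsub_mx det_mulmx (expand_det_col _ i').
rewrite big1 ?mul0r // => l _; rewrite mxE null_basis_col_Oset //.
have : nth (rshift d l) (enum (~: I)) l \in ~: I.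
  by rewrite -mem_enum mem_nth // -cardE cardCI.
by rewrite inE; case: eqP => [-> | _]; rewrite ?iI // mul0r.
Qed.

End ReducedBasis.

Lemma det_perm_sq (R : comNzRingType) n (M N : 'M[R]_n) (p q : 'S_n) :
  \det (col_perm q (row_perm p M)) * \det (col_perm q (row_perm p N))
  = \det M * \det N.
Proof.
rewrite !col_permE !row_permE !det_mulmx !det_perm.
set a := (-1) ^+ p; set b := (-1) ^+ (q^-1)%g.
transitivity (a ^+ 2 * b ^+ 2 * (\det M * \det N)); first by ring.
by rewrite /a /b !sqrr_sign !mul1r.
Qed.

Section UnitColumns.
Variables (R : comNzRingType) (d s : nat) (I : {set 'I_(d + s)}).
Hypothesis cardI : #|I| = d.

Lemma size_enum_set : size (enum I) = d.
Proof. by rewrite -cardE. Qed.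

Lemma size_enum_setC : size (enum (~: I)) = s.
Proof. by rewrite -cardE; have := cardsC I; rewrite card_ord cardI => /addnI. Qed.

Definition row_order (a : 'I_(d + s)) : 'I_(d + s) := nth a (enum I ++ enum (~: I)) a.

Lemma row_order_lshift (a : 'I_d) : row_order (lshift s a) = nth (lshift s a) (enum I) a.
Proof. by rewrite /row_order nth_cat -cardE cardI /= ltn_ord. Qed.

Lemma row_order_rshift (b : 'I_s) :
  row_order (rshift d b) = nth (rshift d b) (enum (~: I)) b.
Proof. by rewrite /row_order nth_cat -cardE cardI /= ltnNge leq_addr /= addKn. Qed.

Lemma row_order_inj : injective row_order.
Proof.
have size_cat : size (enum I ++ enum (~: I)) = (d + s)%N.
  by rewrite size_cat size_enum_setC -cardE cardI.
have uniq_cat : uniq (enum I ++ enum (~: I)).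
  rewrite cat_uniq !enum_uniq andbT /=; apply/hasPn => x.
  by rewrite !mem_enum inE => /negbTE ->.
move=> a1 a2 eq12; apply/val_inj/eqP.
rewrite -(nth_uniq a1 _ _ uniq_cat) ?size_cat ?ltn_ord //.
by rewrite [nth a1 _ a2](set_nth_default a2) ?size_cat ?ltn_ord //; apply/eqP.
Qed.

Lemma col_swap_subproof (a : 'I_d) : (s + a < d + s)%N.
Proof. by rewrite addnC ltn_add2r. Qed.

(* Under [col_perm], moves the last [d] columns in front of the first [s] ones. *)
Definition col_swap (a : 'I_(d + s)) : 'I_(d + s) :=
  match split a with
  | inl a' => Ordinal (col_swap_subproof a')
  | inr b => widen_ord (leq_addl d s) b
  end.

Lemma col_swap_lshift a : col_swap (lshift s a) = Ordinal (col_swap_subproof a).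
Proof. by rewrite /col_swap (unsplitK (inl a : 'I_d + 'I_s)). Qed.

Lemma col_swap_rshift b : col_swap (rshift d b) = widen_ord (leq_addl d s) b.
Proof. by rewrite /col_swap (unsplitK (inr b : 'I_d + 'I_s)). Qed.

Lemma col_swap_inj : injective col_swap.
Proof.
move=> a1 a2; rewrite -[a1]splitK -[a2]splitK.
case: (split a1) => x1; case: (split a2) => x2 /=;
  rewrite ?col_swap_lshift ?col_swap_rshift => /(congr1 val) /= eq12.
- by congr lshift; apply: val_inj; move/eqP: eq12; rewrite eqn_add2l => /eqP.
- by move: (ltn_ord x2); rewrite -eq12 ltnNge leq_addr.
- by move: (ltn_ord x1); rewrite eq12 ltnNge leq_addr.
- by congr rshift; apply: val_inj.
Qed.

(* A matrix whose columns [s, ..., s + d - 1] are the unit vectors of the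
   rows in [I] becomes block upper triangular after reordering. *)
Lemma det_perm_unit_columns (M : 'M[R]_(d + s)) (A : 'M[R]_(d + s, s)) :
  (forall i (a : 'I_d), M i (col_swap (lshift s a)) = (i == row_order (lshift s a))%:R) ->
  (forall i (b : 'I_s), M i (col_swap (rshift d b)) = A i b) ->
  \det (col_perm (perm col_swap_inj) (row_perm (perm row_order_inj) M))
  = \det (delrows I A).
Proof.
move=> M_unit M_A; set P := col_perm _ _.
rewrite -[P]submxK.
have -> : ulsubmx P = 1%:M.
  apply/matrixP => a a'; rewrite !mxE !permE /= M_unit (inj_eq row_order_inj).
  by rewrite (inj_eq (@lshift_inj _ _)).
have -> : dlsubmx P = 0.
  apply/matrixP => b a; rewrite !mxE !permE /= M_unit (inj_eq row_order_inj).
  by rewrite eq_rlshift.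
have -> : drsubmx P = delrows I A.
  by apply/matrixP => b b'; rewrite !mxE !permE /= M_A row_order_rshift.
by rewrite det_ublock det1 mul1r.
Qed.

End UnitColumns.

Lemma det_Ymat_Gmat_xreac_set (R : fieldType) (d s m : nat)
    (rs : 'I_m -> cplx (d + s) * cplx (d + s)) (Rr : {set 'I_m}) (e : 'I_s -> 'I_m)
    (cardR : #|Rr| = s) (he : enumerates Rr e) (I : {set 'I_(d + s)}) :
    #|I| = d ->
  \det (Ymat R (d + s) rs (xreac_set Rr I)) * \det (Gmat R (d + s) rs (xreac_set Rr I))
  = \det (delrows I (YR R rs Rr)) * \det (delrows I (GR R rs Rr)).
Proof.
move=> cardI.
rewrite -(det_perm_sq _ _ (perm (row_order_inj cardI)) (perm (@col_swap_inj d s))).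
have nth_unit i a : nth (inr i) (enum (xreac_set Rr I)) (col_swap (lshift s a))
                    = inr (row_order I (lshift s a)).
  rewrite col_swap_lshift /= (nth_xreac_set_inr cardR _ _ cardI) (row_order_lshift cardI).
  by rewrite [nth (lshift s a) _ _](set_nth_default i) // size_enum_set.
have nth_R x0 b : nth x0 (enum (xreac_set Rr I)) (col_swap (rshift d b)) = inl (e b).
  by rewrite col_swap_rshift /= (nth_xreac_set_inl cardR he).
rewrite (det_perm_unit_columns cardI (A := YR R rs Rr)) => [||i b]; last first.
- by rewrite mxE nth_R (YRE R rs cardR he).
- by move=> i a; rewrite mxE nth_unit /= ffunE.
rewrite (det_perm_unit_columns cardI (A := GR R rs Rr)) // => [i a | i b].
- by rewrite mxE nth_unit /= !ffunE subr0.
- by rewrite mxE nth_R (GRE R rs cardR he).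
Qed.

Lemma cpow_prod_enum (R : fieldType) n m (rs : 'I_m -> cplx n * cplx n)
    (c : 'I_n -> R) s (Rr : {set 'I_m}) (e : 'I_s -> 'I_m)
    (cardR : #|Rr| = s) (he : enumerates Rr e) (I : {set 'I_n}) :
    (forall i, c i != 0) ->
  (\prod_k \prod_l c l ^+ (rs (e k)).1 l) * \prod_(j in ~: I) (c j)^-1
  = cpow rs Rr c * \prod_(i in I) c i.
Proof.
move=> c_neq0.
have cpowE : cpow rs Rr c = \prod_i (c i ^+ (\sum_(r in Rr) (rs r).1 i)%N * (c i)^-1).
  by apply: eq_bigr => i _; rewrite expfzDr ?c_neq0 // exprN1 -exprnP.
rewrite cpowE big_split /= exchange_big /=.
rewrite (eq_bigr (fun l => c l ^+ (\sum_(r in Rr) (rs r).1 l)%N)) => [|l _]; last first.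
  by rewrite prodrXr (big_enumerates cardR he).
rewrite -mulrA; congr (_ * _).
have -> : \prod_(j in ~: I) (c j)^-1 = \prod_(j | j \notin I) (c j)^-1.
  by apply: eq_bigl => j; rewrite inE.
rewrite [X in _ = X * _](bigID (mem I)) /= mulrAC -big_split /=.
by rewrite [in RHS]big1 ?mul1r // => i _; rewrite mulVf.
Qed.

Section ReactionSetsRs.
Variables (d s m : nat) (rs : 'I_m -> cplx (d + s) * cplx (d + s)).

Lemma Rs_xreac_set X :
  X \in Rs d s rs -> X = xreac_set [set r | inl r \in X] [set i | inr i \in X].
Proof.
rewrite inE => /existsP [Rr /existsP [I /and3P [_ _ /eqP X_eq]]].
have -> : X = xreac_set Rr I := X_eq.
by rewrite xreac_set_inl xreac_set_inr.
Qed.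

Lemma mem_Rs_xreac_set (Rr : {set 'I_m}) (I : {set 'I_(d + s)}) : #|Rr| = s ->
  (xreac_set Rr I \in Rs d s rs) = (I \in Od d rs).
Proof.
move=> cardR; apply/idP/idP => [| OdI]; last first.
  rewrite inE; apply/existsP; exists Rr; apply/existsP; exists I.
  by rewrite cardR eqxx OdI /=.
rewrite inE => /existsP [Rr' /existsP [I' /and3P [_ OdI' /eqP X_eq]]].
have X_eq' : xreac_set Rr I = xreac_set Rr' I' := X_eq.
by move: OdI'; rewrite -(xreac_set_inr Rr' I') -X_eq' xreac_set_inr.
Qed.

End ReactionSetsRs.

Lemma mcoeff_det_jac_Od (R : fieldType) d s m (rs : 'I_m -> cplx (d + s) * cplx (d + s))
    (Om : 'M[R]_(d, d + s)) (c : 'I_(d + s) -> R) (Rr : {set 'I_m}) :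
    (forall (i : 'I_d) (j : 'I_(d + s)), (j < d)%N ->
       Om i j = ((val i == val j) : nat)%:R) ->
    Om *m (stoich R rs)^T = 0 -> (forall i, c i != 0) -> #|Rr| = s ->
  (\det (jac rs Om c))@_(monR Rr)
  = (-1) ^+ s * cpow rs Rr c *
    \sum_(I in Od d rs)
      \det (delrows I (YR R rs Rr)) * \det (delrows I (GR R rs Rr)) * \prod_(i in I) c i.
Proof.
move=> Om_id Om_stoich c_neq0 cardR; have [e he] := exists_enumerates cardR.
rewrite (mcoeff_det_jac_monR rs Om c cardR he).
rewrite (det_stoich_mul_grad_mx Om_id Om_stoich cardR he c_neq0) det_YR_div_GR.
rewrite -!mulrA; congr (_ * _); rewrite !big_distrr /=.
rewrite (bigID (fun I : {set 'I_(d + s)} => I \subset Oset rs)) /=.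
rewrite [X in _ + X]big1 ?addr0 => [|I /andP [/eqP cardI notO]]; last first.
  by rewrite (det_delrows_GR_eq0 Om_id Om_stoich cardR he cardI notO) !mulr0.
apply: eq_big => [I | I /andP [/eqP cardI _]]; first by rewrite inE andbC.
transitivity ((\prod_k \prod_l c l ^+ (rs (e k)).1 l) * \prod_(j in ~: I) (c j)^-1
   * (\det (delrows I (YR R rs Rr)) * \det (delrows I (GR R rs Rr)))); first by ring.
by rewrite (cpow_prod_enum rs cardR he I c_neq0); ring.
Qed.

Lemma sum_Rs_sigma (R : fieldType) d s m (rs : 'I_m -> cplx (d + s) * cplx (d + s))
    (c : 'I_(d + s) -> R) (Rr : {set 'I_m}) : #|Rr| = s ->
  \sum_(X in Rs d s rs | [set r | inl r \in X] == Rr)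
     sigma R rs X * \prod_(i | inr i \in X) c i
  = (-1) ^+ (d + s) * \sum_(I in Od d rs)
      \det (delrows I (YR R rs Rr)) * \det (delrows I (GR R rs Rr)) * \prod_(i in I) c i.
Proof.
move=> cardR; have [e he] := exists_enumerates cardR.
rewrite big_distrr /= (reindex_onto (xreac_set Rr) (fun X => [set i | inr i \in X])) /=.
  apply: eq_big => [I | I]; rewrite xreac_set_inl xreac_set_inr !eqxx !andbT.
    exact: mem_Rs_xreac_set.
  rewrite mem_Rs_xreac_set // inE => /andP [_ /eqP cardI].
  rewrite /sigma -mulrA (det_Ymat_Gmat_xreac_set R rs cardR he cardI).
  rewrite (eq_bigl (fun i => i \in I)) => [|i]; last first.
    by have := xreac_set_inr Rr I; move/setP/(_ i); rewrite inE.
  by ring.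
by move=> X /andP [/Rs_xreac_set X_eq /eqP XR]; rewrite {2}X_eq XR.
Qed.

Theorem corollary7p3 (R : realFieldType) (d s m : nat)
  (rs : 'I_m -> cplx (d + s) * cplx (d + s))
  (rs_inj : injective rs)
  (rs_neq : forall r, (rs r).1 != (rs r).2)
  (dimGamma : \rank (stoich R rs) = s)
  (Om : 'M[R]_(d, d + s))
  (Om_red : reduced_basis rs Om)
  (c : 'I_(d + s) -> R) (c_pos : forall i, 0 < c i) :
  (forall mon, mon \in msupp (\det (jac rs Om c)) ->
     mdeg mon = s /\ forall r, (mon r <= 1)%N)
  /\
  (forall Rr : {set 'I_m}, #|Rr| = s ->
     ((\det (jac rs Om c))@_(monR Rr)
       = (-1) ^+ s * cpow rs Rr c *
         \sum_(I in Od d rs)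
            \det (delrows I (Ymat R s rs (inl @: Rr)))
          * \det (delrows I (Gmat R s rs (inl @: Rr)))
          * \prod_(i in I) c i)
     /\
     ((\det (jac rs Om c))@_(monR Rr)
       = (-1) ^+ d * cpow rs Rr c *
         \sum_(X in Rs d s rs | [set r | inl r \in X] == Rr)
            sigma R rs X * \prod_(i | inr i \in X) c i)).
Proof.
case: Om_red => _ /andP [Om_ker _] Om_id.
have Om_stoich : Om *m (stoich R rs)^T = 0 by apply/eqP; rewrite -sub_kermx.
have c_neq0 i : c i != 0 by rewrite gt_eqF.
split=> [mon | Rr cardR]; first exact: msupp_det_jac.
rewrite (mcoeff_det_jac_Od Om_id Om_stoich c_neq0 cardR) sum_Rs_sigma // exprD.
split=> //; set S := \sum_(I in _) _.
transitivity (((-1) ^+ d) ^+ 2 * ((-1) ^+ s * cpow rs Rr c * S)); last by ring.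
by rewrite sqrr_sign mul1r.
Qed.
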